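(* Let $f\in\mathbb{Z}[x]$ be a cubic polynomial of non-zero discriminant and let $d$ be a square-free integer. There is a constant $C_f$ depending only on $f$ (not on $d$) such that for any two distinct integer points $P=(x,y)\in\mathbb{Z}^2$, $P'=(x',y')\in\mathbb{Z}^2$ on the elliptic curve $E_d: dy^2=f(x)$, \[\hat h(P+P')\le 3\max(\hat h(P),\hat h(P'))+C_f,\] where $\hat h$ is the canonical height on $E_d$ and $+$ is the group law of $E_d$.
   Context: For a point $Q$ of $E_d$, $h_x(Q)=0$ if $Q$ is the point at infinity $O$ (the origin of the group law), and $h_x(Q)=\log\max(|x_0|,|x_1|)$ if $Q=(x,y)$ with $x=x_0/x_1$, $\gcd(x_0,x_1)=1$. The canonical height is $\hat h(Q)=\frac12\lim_{n\to\infty}4^{-n}h_x([2^n]Q)$. *)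

From HB Require Import structures.
From mathcomp Require Import all_boot all_order all_algebra.
From mathcomp Require Import all_classical all_reals all_analysis.
Set Implicit Arguments. Unset Strict Implicit. Unset Printing Implicit Defensive.
Import Order.TTheory GRing.Theory Num.Theory.
Import numFieldNormedType.Exports.
Local Open Scope ring_scope.

Definition cubic_disc (f : {poly int}) : int :=
  let a := f`_3 in let b := f`_2 in let c := f`_1 in let e := f`_0 in
  b^+2 * c^+2 - 4 * a * c^+3 - 4 * b^+3 * e - 27 * a^+2 * e^+2 + 18 * a * b * c * e.

Definition squarefree_int (d : int) : Prop :=
  d != 0 /\ forall n : nat, (n ^ 2 %| `|d|)%N -> n = 1%N.

(* rational points of E_d : d y^2 = f(x); None is the point at infinity O *)
Definition ecpt := option (rat * rat).

Definition fQ (f : {poly int}) : {poly rat} := map_poly (fun z : int => z%:~R) f.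

Definition on_curve (f : {poly int}) (d : int) (P : ecpt) : Prop :=
  match P with
  | None => True
  | Some (x, y) => d%:~R * y ^+ 2 = (fQ f).[x]
  end.

(* third intersection of the line through (x1,y1) of slope l, reflected;
   x3 is obtained from x1 + x2 + x3 = (d l^2 - a2) / a3 *)
Definition ec_third (f : {poly int}) (d : int) (l x1 y1 x2 : rat) : ecpt :=
  let x3 := (d%:~R * l ^+ 2 - (f`_2)%:~R) / (f`_3)%:~R - x1 - x2 in
  Some (x3, - (l * (x3 - x1) + y1)).

(* chord-tangent group law on E_d with neutral element O (a flex) *)
Definition ec_add (f : {poly int}) (d : int) (P Q : ecpt) : ecpt :=
  match P, Q with
  | None, _ => Q
  | _, None => P
  | Some (x1, y1), Some (x2, y2) =>
      if x1 == x2 then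
        if y1 + y2 == 0 then None
        else ec_third f d (((fQ f)^`()).[x1] / (2 * d%:~R * y1)) x1 y1 x1
      else ec_third f d ((y2 - y1) / (x2 - x1)) x1 y1 x2
  end.

Definition ec_pow2 (f : {poly int}) (d : int) (n : nat) (Q : ecpt) : ecpt :=
  iter n (fun R => ec_add f d R R) Q.

Definition hx {R : realType} (Q : ecpt) : R :=
  match Q with
  | None => 0
  | Some (x, _) => ln ((Num.max `|numq x| (denq x))%:~R)
  end.

Definition hseq {R : realType} (f : {poly int}) (d : int) (Q : ecpt) : R^nat :=
  fun n => (hx (ec_pow2 f d n Q) : R) / 4 ^+ n.

Definition canon_height {R : realType} (f : {poly int}) (d : int) (Q : ecpt) : R :=
  2^-1 * limn (hseq f d Q).

Definition ipt (x y : int) : ecpt := Some (x%:~R, y%:~R).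

From HB Require Import structures.
From mathcomp Require Import all_boot all_order all_algebra.
From mathcomp Require Import all_classical all_reals all_analysis.
From mathcomp Require Import ring lra zify.
Import Order.TTheory GRing.Theory Num.Theory.
Local Open Scope ring_scope.

Set Implicit Arguments. Unset Strict Implicit. Unset Printing Implicit Defensive.
Import numFieldNormedType.Exports.

(* Writing x(Q) = p/q in lowest terms, x([2]Q) = F(p, q) / G(p, q) for binary
   quartic forms F, G depending on f only: d is eliminated with d y^2 = f(x).
   As disc f <> 0, cubic forms combine F and G into constant multiples of p^7
   and q^7, so gcd(F, G) divides a constant and |h_x([2]Q) - 4 h_x(Q)| is
   bounded independently of d.  Tate's telescoping then bounds
   |hhat(Q) - h_x(Q)/2| uniformly in d.  For integral points with x <> x' the
   chord formula writes x(P + P') as a ratio of integers of size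
   O(max(|x|, |x'|)^3), the d-dependent term being bounded by d y^2 = f(x);
   hence h_x(P + P') <= 3 max(h_x(P), h_x(P')) + O_f(1). *)

(* [homog [:: c_0; ...; c_n] p q] is the binary form sum_i c_i p^i q^(n-i). *)
Fixpoint homog {R : pzRingType} (s : seq R) (p q : R) : R :=
  if s is c :: s' then c * q ^+ size s' + p * homog s' p q else 0.

Lemma homog_rcons (R : comNzRingType) (s : seq R) (a p q : R) :
  homog (rcons s a) p q = q * homog s p q + a * p ^+ size s.
Proof.
elim: s => [|c s IH] /=; first by rewrite !mulr0 !expr0 !mulr1 addr0 add0r.
by rewrite IH size_rcons !exprS; ring.
Qed.

Lemma horner_homog (R : comNzRingType) (P : {poly R}) (x : R) : P.[x] = homog P x 1.
Proof.
rewrite horner_coef; elim: (polyseq P) => [|c s IH] /=; first by rewrite big_ord0.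
rewrite big_ord_recl /= expr1n !mulr1 -IH big_distrr /=; congr (_ + _).
by apply: eq_bigr => i _; rewrite exprS mulrCA.
Qed.

Lemma sum_norm_ge0 (R : numDomainType) (s : seq R) : 0 <= \sum_(c <- s) `|c|.
Proof. by apply: sumr_ge0 => c _. Qed.

Lemma norm_le_sum_norm (R : numDomainType) (s : seq R) (c : R) :
  c \in s -> `|c| <= \sum_(c <- s) `|c|.
Proof.
move=> cs; rewrite (perm_big _ (perm_to_rem cs)) big_cons lerDl.
by apply: sumr_ge0.
Qed.

Lemma norm_homog_le (R : numDomainType) (s : seq R) (p q m : R) :
  `|p| <= m -> `|q| <= m ->
  `|homog s p q| <= (\sum_(c <- s) `|c|) * m ^+ (size s).-1.
Proof.
move=> hp hq; have m0 : 0 <= m := le_trans (normr_ge0 q) hq.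
elim: s => [|c s IH]; first by rewrite normr0 big_nil mul0r.
rewrite big_cons /= mulrDl; apply: le_trans (ler_normD _ _) _; apply: lerD.
  by rewrite normrM normrX ler_wpM2l // lerXn2r // nnegrE.
case: s IH => [|c' s] IH /=; first by rewrite mulr0 normr0 big_nil mul0r.
by rewrite normrM exprS mulrCA; apply: ler_pM.
Qed.

Lemma norm_comb_le (R : realDomainType) (u v a b : R) :
  `|u * a + v * b| <= (`|u| + `|v|) * Num.max `|a| `|b|.
Proof.
rewrite mulrDl (le_trans (ler_normD _ _)) // lerD // normrM ler_wpM2l //.
  by rewrite le_max lexx.
by rewrite le_max lexx orbT.
Qed.

Lemma rational_root_bound (s : seq int) (a p q : int) :
  a != 0 -> coprimez p q -> homog (rcons s a) p q = 0 ->
  Num.max `|p| `|q| <= `|a| + \sum_(c <- s) `|c|.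
Proof.
move=> a0 cop; rewrite homog_rcons => /eqP; rewrite addrC addr_eq0 => /eqP root.
have S0 := sum_norm_ge0 s; set S : int := \sum_(c <- s) `|c| in S0 *.
have q_dvd_a : (q %| a)%Z.
  have cop' : coprimez q (p ^+ size s) by rewrite coprimezXr // coprimez_sym.
  rewrite -(Gauss_dvdzl _ cop').
  by rewrite root rpredN; apply/dvdz_mulr/dvdzz.
have qa : `|q| <= `|a|.
  case/dvdzP: q_dvd_a a0 => k ->; rewrite mulf_eq0 negb_or => /andP[k0 _].
  by rewrite normrM ler_peMl //; lia.
have [pq|qp] := leP `|p| `|q|; first by lia.
have sz : size s != 0%N.
  apply: contra_neq a0 => /size0nil s0.
  by move: root; rewrite s0 /= mulr0 oppr0 expr0 mulr1.
have hb := norm_homog_le s (lexx `|p|) (ltW qp); rewrite -/S in hb.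
have p0 : 0 < `|p| by apply: le_lt_trans qp.
have key : `|a| * `|p| <= `|q| * S.
  rewrite -(ler_pM2r (exprn_gt0 (size s).-1 p0)) -mulrA -exprS prednK ?lt0n //.
  by rewrite -normrX -normrM root normrN normrM -mulrA ler_wpM2l.
have : `|a| * `|p| <= `|a| * S.
  by apply: le_trans key _; rewrite ler_wpM2r.
rewrite ler_pM2l ?normr_gt0 //; lia.
Qed.

Definition ht (x : rat) : int := Num.max `|numq x| (denq x).

Lemma ht_ge1 (x : rat) : 1 <= ht x.
Proof. by rewrite le_max; apply/orP; right; have := denq_gt0 x; lia. Qed.

Lemma ht_int (z : int) : ht z%:~R = Num.max `|z| 1.
Proof. by rewrite /ht numq_int denq_int. Qed.

Lemma max_norm_frac (A B : int) : B != 0 ->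
  Num.max `|A| `|B| = gcdz A B * ht (A%:~R / B%:~R).
Proof.
move=> B0; have [eA eB] := valq_frac (x := (A, B)) B0; rewrite fracqE /= in eA eB.
have sgB : `|Num.sg B| = 1 by rewrite normr_sg B0.
have nA : `|A| = gcdz A B * `|numq (A%:~R / B%:~R)|.
  by rewrite {1}eA !normrM sgB mul1r.
have nB : `|B| = gcdz A B * denq (A%:~R / B%:~R).
  by rewrite {1}eB !normrM sgB mul1r (gtr0_norm (denq_gt0 _)).
by rewrite nA nB -maxr_pMr.
Qed.

Lemma ht_frac_le (A B : int) : B != 0 -> ht (A%:~R / B%:~R) <= Num.max `|A| `|B|.
Proof.
move=> B0; rewrite max_norm_frac // ler_peMl ?(le_trans ler01 (ht_ge1 _)) //.
by rewrite lez_nat gcdn_gt0 !absz_gt0 B0 orbT.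
Qed.

Lemma ht_frac_ge (A B T : int) : B != 0 -> T != 0 -> (gcdz A B %| T)%Z ->
  Num.max `|A| `|B| <= `|T| * ht (A%:~R / B%:~R).
Proof.
move=> B0 T0 /dvdzP[k eT]; rewrite max_norm_frac // ler_wpM2r ?(le_trans ler01 (ht_ge1 _)) //.
by rewrite eT normrM ler_peMl //; move: T0; rewrite eT mulf_eq0 negb_or => /andP[k0 _]; lia.
Qed.

Lemma ln_intr_ge0 (R : realType) (K : int) : 0 <= ln (K%:~R : R).
Proof.
have [K0|K1] := lerP K 0; first by rewrite ln0 // lerz0.
by rewrite ln_ge0 // ler1z.
Qed.

Lemma ler_ln_intr (R : realType) (X Y : int) : 1 <= X -> X <= Y ->
  ln (X%:~R : R) <= ln (Y%:~R : R).
Proof.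
move=> X1 XY; rewrite ler_ln ?ler_int // posrE ltr0z; lia.
Qed.

Lemma ln_intr_le (R : realType) (X Y K : int) : 1 <= X -> 1 <= Y -> X <= K * Y ->
  ln (X%:~R : R) <= ln (K%:~R : R) + ln (Y%:~R : R).
Proof.
move=> X1 Y1 XKY; have K0 : 0 < K by nia.
have pos (n : int) : 0 < n -> (n%:~R : R) \is Num.pos by rewrite posrE ltr0z.
have Y0 : 0 < Y := lt_le_trans ltr01 Y1.
by rewrite -lnM ?pos // -intrM ler_ln ?pos ?ler_int ?mulr_gt0.
Qed.

Lemma ln_intrX (R : realType) (m : int) (n : nat) : 0 < m ->
  ln ((m ^+ n)%:~R : R) = n%:R * ln (m%:~R : R).
Proof. by move=> m0; rewrite rmorphXn lnXn ?mulr_natl // ltr0z. Qed.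

Lemma limn_mid_monotone (R : realType) (u v : R^nat) :
  nonincreasing_seq u -> nondecreasing_seq v -> (forall n, v n <= u n) ->
  v 0%N <= limn (fun n => 2^-1 * (u n + v n)) <= u 0%N.
Proof.
move=> u_dec v_inc vu.
have u_cvg : cvgn u.
  apply/cvg_ex; eexists; apply: nonincreasing_cvgn => //.
  by exists (v 0%N) => _ [n _ <-]; exact: le_trans (v_inc _ _ (leq0n n)) (vu n).
have v_cvg : cvgn v.
  apply/cvg_ex; eexists; apply: nondecreasing_cvgn => //.
  by exists (u 0%N) => _ [n _ <-]; exact: le_trans (vu n) (u_dec _ _ (leq0n n)).
have w_cvg : cvgn (fun n => 2^-1 * (u n + v n)).
  exact: is_cvgM (is_cvg_cst _) (is_cvgD u_cvg v_cvg).
apply/andP; split; [apply: (limr_ge w_cvg) | apply: (limr_le w_cvg)]; apply: nearW => n.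
  by have := vu n; have := v_inc _ _ (leq0n n); lra.
by have := vu n; have := u_dec _ _ (leq0n n); lra.
Qed.

Lemma tate_limit (R : realType) (r c : R) (a : R^nat) : 1 < r ->
  (forall n, `|a n.+1 - r * a n| <= c) ->
  `|limn (fun n => a n / r ^+ n) - a 0%N| <= c / (r - 1).
Proof.
move=> r1 ha; have hab n : - c <= a n.+1 - r * a n <= c by rewrite -ler_norml.
have r0 : 0 < r by apply: lt_trans r1.
have r1_gt0 : 0 < r - 1 by rewrite subr_gt0.
have [r_neq0 r1_neq0] : r != 0 /\ r - 1 != 0 by rewrite !gt_eqF.
have rn_neq0 n : r ^+ n != 0 by rewrite expf_neq0.
have rn_ge0 n : 0 <= r ^+ n by rewrite exprn_ge0 // ltW.
pose e n := c / (r - 1) / r ^+ n; pose b n := a n / r ^+ n.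
have u_dec : nonincreasing_seq (b \+ e).
  apply/nonincreasing_seqP => n /=; rewrite -subr_ge0.
  have -> : b n + e n - (b n.+1 + e n.+1) = (c - (a n.+1 - r * a n)) / r ^+ n.+1.
    by rewrite /b /e exprS; field; rewrite rn_neq0 r_neq0 r1_neq0.
  by rewrite divr_ge0 //; have /andP[] := hab n; lra.
have v_inc : nondecreasing_seq (b \- e).
  apply/nondecreasing_seqP => n /=; rewrite -subr_ge0.
  have -> : b n.+1 - e n.+1 - (b n - e n) = (c + (a n.+1 - r * a n)) / r ^+ n.+1.
    by rewrite /b /e exprS; field; rewrite rn_neq0 r_neq0 r1_neq0.
  by rewrite divr_ge0 //; have /andP[] := hab n; lra.
have c0 : 0 <= c by have /andP[] := hab 0%N; lra.
have e0 n : 0 <= e n by rewrite /e !divr_ge0 // ltW.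
have vu n : (b \- e) n <= (b \+ e) n by rewrite /= lerD2l (le_trans _ (e0 n)) // oppr_le0.
have -> : (fun n => a n / r ^+ n) = (fun n => 2^-1 * ((b \+ e) n + (b \- e) n)).
  by apply: funext => n; rewrite /= /b /e; field; rewrite rn_neq0 r1_neq0.
have := limn_mid_monotone u_dec v_inc vu.
by rewrite ler_distl /= /b /e !expr0 !divr1.
Qed.

Lemma cubic_lead_neq0 (f : {poly int}) : size f = 4%N -> f`_3 != 0.
Proof.
move=> sf; have : lead_coef f != 0 by rewrite lead_coef_eq0 -size_poly_eq0 sf.
by rewrite lead_coefE sf.
Qed.

Section Duplication.
Variable f : {poly int}.
Local Notation a0 := f`_0.
Local Notation a1 := f`_1.
Local Notation a2 := f`_2.
Local Notation a3 := f`_3.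

Definition cubic_form (p q : int) : int := homog [:: a0; a1; a2; a3] p q.

(* x([2]Q) = dup_num p q / dup_den p q when x(Q) = p/q. *)
Definition dup_num (p q : int) : int :=
  (3 * a3 * p ^+ 2 + 2 * a2 * p * q + a1 * q ^+ 2) ^+ 2
  - (4 * a2 * q + 8 * a3 * p) * cubic_form p q.

Definition dup_den (p q : int) : int := 4 * a3 * q * cubic_form p q.

Definition dup_num_coef : seq int :=
  [:: a1 ^+ 2 - 4 * a0 * a2; - 8 * a0 * a3; - 2 * a1 * a3; 0; a3 ^+ 2].

Definition dup_den_coef : seq int :=
  [:: 4 * a0 * a3; 4 * a1 * a3; 4 * a2 * a3; 4 * a3 ^+ 2; 0].

Lemma dup_numE p q : dup_num p q = homog dup_num_coef p q.
Proof. by rewrite /dup_num /cubic_form /=; ring. Qed.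

Lemma dup_denE p q : dup_den p q = homog dup_den_coef p q.
Proof. by rewrite /dup_den /cubic_form /=; ring. Qed.

(* Cubic forms U, V with U F + V G = c q^7 and c' p^7 respectively (F, G the
   duplication forms), found by solving the linear system for their
   coefficients; they certify that F and G have no common zero on P^1. *)
Definition bezout_q_num : seq int := [::
  4 * a1^+2 * a2^+4 - 32 * a1^+3 * a2^+2 * a3 + 64 * a1^+4 * a3^+2
  - 16 * a0 * a2^+5 + 136 * a0 * a1 * a2^+3 * a3
  - 288 * a0 * a1^+2 * a2 * a3^+2 - 108 * a0^+2 * a2^+2 * a3^+2
  + 432 * a0^+2 * a1 * a3^+3;
  - 8 * a1^+2 * a2^+3 * a3 + 32 * a1^+3 * a2 * a3^+2 + 32 * a0 * a2^+4 * a3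
  - 144 * a0 * a1 * a2^+2 * a3^+2 + 216 * a0^+2 * a2 * a3^+3;
  - 12 * a1^+2 * a2^+2 * a3^+2 + 48 * a1^+3 * a3^+3 + 48 * a0 * a2^+3 * a3^+2
  - 216 * a0 * a1 * a2 * a3^+3 + 324 * a0^+2 * a3^+4;
  0].

Definition bezout_q_den : seq int := [::
  2 * a1^+3 * a2^+3 - 8 * a1^+4 * a2 * a3 - 8 * a0 * a1 * a2^+4
  + 9 * a0 * a1^+2 * a2^+2 * a3 + 108 * a0 * a1^+3 * a3^+2
  + 108 * a0^+2 * a2^+3 * a3 - 540 * a0^+2 * a1 * a2 * a3^+2
  + 729 * a0^+3 * a3^+3;
  - 5 * a1^+3 * a2^+2 * a3 + 20 * a1^+4 * a3^+2 + 20 * a0 * a1 * a2^+3 * a3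
  - 90 * a0 * a1^+2 * a2 * a3^+2 + 135 * a0^+2 * a1 * a3^+3;
  - a1^+2 * a2^+3 * a3 + 4 * a1^+3 * a2 * a3^+2 + 4 * a0 * a2^+4 * a3
  - 18 * a0 * a1 * a2^+2 * a3^+2 + 27 * a0^+2 * a2 * a3^+3;
  3 * a1^+2 * a2^+2 * a3^+2 - 12 * a1^+3 * a3^+3 - 12 * a0 * a2^+3 * a3^+2
  + 54 * a0 * a1 * a2 * a3^+3 - 81 * a0^+2 * a3^+4].

Definition bezout_p_num : seq int := [::
  - 12 * a0 * a1^+5 * a2^+2 * a3 + 48 * a0 * a1^+6 * a3^+2
  + 96 * a0^+2 * a1^+3 * a2^+3 * a3 - 408 * a0^+2 * a1^+4 * a2 * a3^+2
  - 192 * a0^+3 * a1 * a2^+4 * a3 + 768 * a0^+3 * a1^+2 * a2^+2 * a3^+2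
  + 708 * a0^+3 * a1^+3 * a3^+3 + 384 * a0^+4 * a2^+3 * a3^+2
  - 3024 * a0^+4 * a1 * a2 * a3^+3 + 2592 * a0^+5 * a3^+4;
  - 12 * a1^+6 * a2^+2 * a3 + 48 * a1^+7 * a3^+2
  + 100 * a0 * a1^+4 * a2^+3 * a3 - 424 * a0 * a1^+5 * a2 * a3^+2
  - 224 * a0^+2 * a1^+2 * a2^+4 * a3 + 912 * a0^+2 * a1^+3 * a2^+2 * a3^+2
  + 676 * a0^+2 * a1^+4 * a3^+3 + 64 * a0^+3 * a2^+5 * a3
  + 64 * a0^+3 * a1 * a2^+3 * a3^+2 - 2988 * a0^+3 * a1^+2 * a2 * a3^+3
  + 432 * a0^+4 * a2^+2 * a3^+3 + 2376 * a0^+4 * a1 * a3^+4;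
  - 8 * a1^+5 * a2^+3 * a3 + 32 * a1^+6 * a2 * a3^+2
  + 64 * a0 * a1^+3 * a2^+4 * a3 - 268 * a0 * a1^+4 * a2^+2 * a3^+2
  - 16 * a0 * a1^+5 * a3^+3 - 128 * a0^+2 * a1 * a2^+5 * a3
  + 480 * a0^+2 * a1^+2 * a2^+3 * a3^+2 + 608 * a0^+2 * a1^+3 * a2 * a3^+3
  + 320 * a0^+3 * a2^+4 * a3^+2 - 2304 * a0^+3 * a1 * a2^+2 * a3^+3
  - 108 * a0^+3 * a1^+2 * a3^+4 + 2160 * a0^+4 * a2 * a3^+4;
  4 * a1^+4 * a2^+4 * a3 - 32 * a1^+5 * a2^+2 * a3^+2 + 64 * a1^+6 * a3^+3
  - 32 * a0 * a1^+2 * a2^+5 * a3 + 272 * a0 * a1^+3 * a2^+3 * a3^+2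
  - 576 * a0 * a1^+4 * a2 * a3^+3 + 64 * a0^+2 * a2^+6 * a3
  - 576 * a0^+2 * a1 * a2^+4 * a3^+2 + 1080 * a0^+2 * a1^+2 * a2^+2 * a3^+3
  + 864 * a0^+2 * a1^+3 * a3^+4 + 864 * a0^+3 * a2^+3 * a3^+3
  - 3888 * a0^+3 * a1 * a2 * a3^+4 + 2916 * a0^+4 * a3^+5].

Definition bezout_p_den : seq int := [::
  3 * a1^+7 * a2^+2 - 12 * a1^+8 * a3 - 36 * a0 * a1^+5 * a2^+3
  + 150 * a0 * a1^+6 * a2 * a3 + 144 * a0^+2 * a1^+3 * a2^+4
  - 600 * a0^+2 * a1^+4 * a2^+2 * a3 - 177 * a0^+2 * a1^+5 * a3^+2
  - 192 * a0^+3 * a1 * a2^+5 + 672 * a0^+3 * a1^+2 * a2^+3 * a3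
  + 1464 * a0^+3 * a1^+3 * a2 * a3^+2 + 384 * a0^+4 * a2^+4 * a3
  - 3024 * a0^+4 * a1 * a2^+2 * a3^+2 - 648 * a0^+4 * a1^+2 * a3^+3
  + 2592 * a0^+5 * a2 * a3^+3;
  - a1^+6 * a2^+3 + 4 * a1^+7 * a2 * a3 + 12 * a0 * a1^+4 * a2^+4
  - 76 * a0 * a1^+5 * a2^+2 * a3 + 104 * a0 * a1^+6 * a3^+2
  - 48 * a0^+2 * a1^+2 * a2^+5 + 416 * a0^+2 * a1^+3 * a2^+3 * a3
  - 857 * a0^+2 * a1^+4 * a2 * a3^+2 + 64 * a0^+3 * a2^+6
  - 704 * a0^+3 * a1 * a2^+4 * a3 + 1464 * a0^+3 * a1^+2 * a2^+2 * a3^+2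
  + 1470 * a0^+3 * a1^+3 * a3^+3 + 1200 * a0^+4 * a2^+3 * a3^+2
  - 6264 * a0^+4 * a1 * a2 * a3^+3 + 5184 * a0^+5 * a3^+4;
  - 5 * a1^+6 * a2^+2 * a3 + 20 * a1^+7 * a3^+2 + 44 * a0 * a1^+4 * a2^+3 * a3
  - 186 * a0 * a1^+5 * a2 * a3^+2 - 112 * a0^+2 * a1^+2 * a2^+4 * a3
  + 464 * a0^+2 * a1^+3 * a2^+2 * a3^+2 + 263 * a0^+2 * a1^+4 * a3^+3
  + 64 * a0^+3 * a2^+5 * a3 - 160 * a0^+3 * a1 * a2^+3 * a3^+2
  - 1224 * a0^+3 * a1^+2 * a2 * a3^+3 + 432 * a0^+4 * a2^+2 * a3^+3
  + 864 * a0^+4 * a1 * a3^+4;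
  2 * a1^+5 * a2^+3 * a3 - 8 * a1^+6 * a2 * a3^+2
  - 16 * a0 * a1^+3 * a2^+4 * a3 + 67 * a0 * a1^+4 * a2^+2 * a3^+2
  + 4 * a0 * a1^+5 * a3^+3 + 32 * a0^+2 * a1 * a2^+5 * a3
  - 120 * a0^+2 * a1^+2 * a2^+3 * a3^+2 - 152 * a0^+2 * a1^+3 * a2 * a3^+3
  - 80 * a0^+3 * a2^+4 * a3^+2 + 576 * a0^+3 * a1 * a2^+2 * a3^+3
  + 27 * a0^+3 * a1^+2 * a3^+4 - 540 * a0^+4 * a2 * a3^+4].

Lemma dup_bezout_q p q :
  homog bezout_q_num p q * dup_num p q + homog bezout_q_den p q * dup_den p q
  = 4 * cubic_disc f ^+ 2 * q ^+ 7.
Proof. by rewrite /dup_num /dup_den /cubic_form /cubic_disc /=; ring. Qed.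

Definition dup_res : int := 4 * a3 ^+ 3 * cubic_disc f ^+ 2.

Lemma dup_res_neq0 : a3 != 0 -> cubic_disc f != 0 -> dup_res != 0.
Proof. by move=> a3_0 disc0; rewrite !mulf_neq0 // expf_neq0. Qed.

Lemma dup_bezout_p p q :
  homog bezout_p_num p q * dup_num p q + homog bezout_p_den p q * dup_den p q
  = dup_res * p ^+ 7.
Proof. by rewrite /dup_num /dup_den /cubic_form /dup_res /cubic_disc /=; ring. Qed.

Lemma dvdz_dup_res p q k : coprimez p q ->
  (k %| dup_num p q)%Z -> (k %| dup_den p q)%Z -> (k %| dup_res)%Z.
Proof.
move=> cop kF kG.
have comb u v : (k %| u * dup_num p q + v * dup_den p q)%Z.
  by rewrite rpredD // dvdz_mull.
have kp : (k %| dup_res * p ^+ 7)%Z by rewrite -(dup_bezout_p p q) comb.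
have kq : (k %| dup_res * q ^+ 7)%Z.
  have -> : dup_res * q ^+ 7 = a3 ^+ 3 * homog bezout_q_num p q * dup_num p q
                               + a3 ^+ 3 * homog bezout_q_den p q * dup_den p q.
    transitivity (a3 ^+ 3 * (4 * cubic_disc f ^+ 2 * q ^+ 7)); first by rewrite /dup_res; ring.
    by rewrite -(dup_bezout_q p q); ring.
  exact: comb.
have /coprimezP[[u v] /= uv] : coprimez (p ^+ 7) (q ^+ 7) by rewrite coprimezXl // coprimezXr.
have -> : dup_res = u * (dup_res * p ^+ 7) + v * (dup_res * q ^+ 7).
  by rewrite mulrCA [v * _]mulrCA -mulrDr uv mulr1.
by rewrite rpredD // dvdz_mull.
Qed.

Definition dup_upper : int := \sum_(c <- dup_num_coef ++ dup_den_coef) `|c|.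

Lemma dup_max_le p q m : `|p| <= m -> `|q| <= m ->
  Num.max `|dup_num p q| `|dup_den p q| <= dup_upper * m ^+ 4.
Proof.
move=> pm qm; have m4 : 0 <= m ^+ 4 by rewrite exprn_ge0 // (le_trans _ qm).
have num_le := norm_homog_le dup_num_coef pm qm.
have den_le := norm_homog_le dup_den_coef pm qm.
rewrite -dup_numE in num_le; rewrite -dup_denE in den_le.
rewrite /dup_upper big_cat /= ge_max mulrDl; apply/andP; split.
  by rewrite (le_trans num_le) // lerDl mulr_ge0 // sum_norm_ge0.
by rewrite (le_trans den_le) // lerDr mulr_ge0 // sum_norm_ge0.
Qed.

Definition dup_lower : int :=
  \sum_(c <- bezout_q_num ++ bezout_q_den ++ bezout_p_num ++ bezout_p_den) `|c|.

Lemma dup_max_ge p q : a3 != 0 -> cubic_disc f != 0 ->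
  Num.max `|p| `|q| ^+ 4 <= dup_lower * Num.max `|dup_num p q| `|dup_den p q|.
Proof.
move=> a3_0 disc0; set m := Num.max `|p| `|q|; set W := Num.max _ _.
have pm : `|p| <= m by rewrite le_max lexx.
have qm : `|q| <= m by rewrite le_max lexx orbT.
have W0 : 0 <= W by rewrite le_max normr_ge0.
have bez (U V : seq int) (c z : int) : size U = 4%N -> size V = 4%N -> c != 0 ->
    homog U p q * dup_num p q + homog V p q * dup_den p q = c * z ^+ 7 ->
    `|z| ^+ 7 <= (\sum_(u <- U) `|u| + \sum_(v <- V) `|v|) * m ^+ 3 * W.
  move=> sU sV c0 e; have c1 : 1 <= `|c| by lia.
  rewrite -normrX (le_trans (ler_peMl (normr_ge0 _) c1)) // -normrM -e.
  rewrite (le_trans (norm_comb_le _ _ _ _)) // ler_wpM2r // mulrDl lerD //.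
    by have := norm_homog_le U pm qm; rewrite sU.
  by have := norm_homog_le V pm qm; rewrite sV.
have cq : 4 * cubic_disc f ^+ 2 != 0 by rewrite mulf_neq0 // expf_neq0.
have hq := bez bezout_q_num bezout_q_den _ q erefl erefl cq (dup_bezout_q p q).
have hp := bez bezout_p_num bezout_p_den _ p erefl erefl
  (dup_res_neq0 a3_0 disc0) (dup_bezout_p p q).
have L0 : 0 <= dup_lower := sum_norm_ge0 _.
have m0 : 0 <= m := le_trans (normr_ge0 p) pm.
have X0 : 0 <= m ^+ 3 * W by rewrite mulr_ge0 // exprn_ge0.
have m7 : m ^+ 3 * m ^+ 4 <= m ^+ 3 * (dup_lower * W).
  rewrite -exprD mulrCA; rewrite -mulrA in hp; rewrite -mulrA in hq.
  have := sum_norm_ge0 bezout_q_num; have := sum_norm_ge0 bezout_q_den.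
  have := sum_norm_ge0 bezout_p_num; have := sum_norm_ge0 bezout_p_den.
  rewrite /dup_lower !big_cat /=.
  have [mp|mq] : m = `|p| \/ m = `|q| by rewrite /m; case: leP; [right|left].
    by move=> *; rewrite {1}mp; apply: le_trans hp _; rewrite ler_wpM2r //; lra.
  by move=> *; rewrite {1}mq; apply: le_trans hq _; rewrite ler_wpM2r //; lra.
have [->|m_gt0] := eqVneq m 0; first by rewrite expr0n mulr_ge0.
by rewrite ler_pM2l // in m7; rewrite exprn_gt0 // lt_def m_gt0.
Qed.

Definition dup_x (x : rat) : rat :=
  (dup_num (numq x) (denq x))%:~R / (dup_den (numq x) (denq x))%:~R.

Lemma ht_numq_denq (x : rat) : ht x = Num.max `|numq x| `|denq x|.
Proof. by rewrite /ht (gtr0_norm (denq_gt0 x)). Qed.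

Lemma ht_dup_x_le x : dup_den (numq x) (denq x) != 0 -> ht (dup_x x) <= dup_upper * ht x ^+ 4.
Proof.
move=> G0; rewrite (le_trans (ht_frac_le _ G0)) // dup_max_le // ht_numq_denq.
  by rewrite le_max lexx.
by rewrite le_max lexx orbT.
Qed.

Lemma ht_dup_x_ge x : a3 != 0 -> cubic_disc f != 0 -> dup_den (numq x) (denq x) != 0 ->
  ht x ^+ 4 <= dup_lower * `|dup_res| * ht (dup_x x).
Proof.
move=> a3_0 disc0 G0; rewrite ht_numq_denq (le_trans (dup_max_ge _ _ a3_0 disc0)) //.
rewrite -mulrA ler_wpM2l ?sum_norm_ge0 // ht_frac_ge ?dup_res_neq0 //.
apply: (@dvdz_dup_res (numq x) (denq x)); rewrite ?dvdz_gcdl ?dvdz_gcdr //.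
by rewrite coprimezE; exact: coprime_num_den.
Qed.

Definition cubic_norm : int := \sum_(c <- [:: a0; a1; a2; a3]) `|c|.

Lemma ht_cubic_root_le x : a3 != 0 -> cubic_form (numq x) (denq x) = 0 -> ht x <= cubic_norm.
Proof.
move=> a3_0 root; rewrite ht_numq_denq.
have cop : coprimez (numq x) (denq x) by rewrite coprimezE; exact: coprime_num_den.
apply: le_trans (rational_root_bound (s := [:: a0; a1; a2]) a3_0 cop root) _.
by rewrite /cubic_norm !big_cons !big_nil; lia.
Qed.

End Duplication.

Section GroupLaw.
Variables (f : {poly int}) (d : int).
Hypothesis f_size : size f = 4%N.
Local Notation c i := ((f`_i)%:~R : rat).
Local Notation D := (d%:~R : rat).

Lemma horner_fQ x : (fQ f).[x] = c 3 * x ^+ 3 + c 2 * x ^+ 2 + c 1 * x + c 0.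
Proof.
rewrite (@horner_coef_wide _ 4) /fQ ?size_map_inj_poly ?f_size //; last exact: intr_inj.
by rewrite !big_ord_recr big_ord0 /= !coef_map /= expr0 expr1 mulr1 add0r; ring.
Qed.

Lemma horner_fQ_deriv x : ((fQ f)^`()).[x] = 3 * c 3 * x ^+ 2 + 2 * c 2 * x + c 1.
Proof.
have sQ : size (fQ f) = 4%N by rewrite size_map_inj_poly ?f_size //; exact: intr_inj.
rewrite (@horner_coef_wide _ 3); last by rewrite -ltnS -sQ lt_size_deriv // -size_poly_eq0 sQ.
by rewrite !big_ord_recr big_ord0 /= !coef_deriv /fQ !coef_map /= expr0 expr1 mulr1 add0r; ring.
Qed.

Lemma horner_cubic_form (x : int) : f.[x] = cubic_form f x 1.
Proof.
rewrite horner_homog /cubic_form; congr homog.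
by move: f_size; case: f => s /= _; case: s => [|? [|? [|? [|? []]]]].
Qed.

Definition line_gap (l x1 y1 X : rat) : rat := (fQ f).[X] - D * (l * (X - x1) + y1) ^+ 2.

Lemma on_curve_third l x1 y1 x2 :
  line_gap l x1 y1 x1 = 0 ->
  (x1 = x2 -> ((fQ f)^`()).[x1] = 2 * D * l * y1) ->
  (x1 != x2 -> line_gap l x1 y1 x2 = 0) ->
  on_curve f d (ec_third f d l x1 y1 x2).
Proof.
move=> g1 tan chord; have c3_0 : c 3 != 0 by rewrite intr_eq0 cubic_lead_neq0.
rewrite /ec_third /on_curve; set X := (_ / _ - x1 - x2).
suff : line_gap l x1 y1 X = 0 by rewrite /line_gap sqrrN => /eqP; rewrite subr_eq0 eq_sym => /eqP.
pose g Z := c 3 * Z ^+ 3 + c 2 * Z ^+ 2 + c 1 * Z + c 0 - D * (l * (Z - x1) + y1) ^+ 2.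
have gE Z : line_gap l x1 y1 Z = g Z by rewrite /line_gap horner_fQ.
rewrite gE; rewrite gE in g1; set K := c 3 * X + c 3 * (x1 + x2) + c 2 - D * l ^+ 2.
(* g is a cubic with leading coefficient c 3 vanishing at x1 and x2 (doubly at
   x1 if x1 = x2); K = 0 says X is its third root. *)
have K0 : K = 0 by rewrite /K /X; field.
have [x12|x12] := eqVneq x1 x2.
  have -> : g X = g x1 + (((fQ f)^`()).[x1] - 2 * D * l * y1) * (X - x1) + (X - x1) ^+ 2 * K.
    by rewrite horner_fQ_deriv /g /K -x12; ring.
  by rewrite g1 tan // K0 subrr mul0r mulr0 !addr0.
have : (x1 - x2) * g X = g x1 * (X - x2) - g x2 * (X - x1) + (x1 - x2) * (X - x1) * (X - x2) * K.
  by rewrite /g /K; ring.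
rewrite g1 -(gE x2) chord // K0 !(mul0r, mulr0, subrr, addr0) => /eqP.
by rewrite mulf_eq0 subr_eq0 (negPf x12) => /eqP.
Qed.

Lemma on_curve_add P Q : d != 0 ->
  on_curve f d P -> on_curve f d Q -> on_curve f d (ec_add f d P Q).
Proof.
move=> d0; have D0 : D != 0 by rewrite intr_eq0.
case: P => [[x1 y1]|] //; case: Q => [[x2 y2]|] //= h1 h2.
have g1 l : line_gap l x1 y1 x1 = 0 by rewrite /line_gap subrr mulr0 add0r h1 subrr.
have [x12|x12] := eqVneq x1 x2.
  have [//|y12] := eqVneq (y1 + y2) 0.
  have y1_0 : y1 != 0.
    apply: contra_neq y12 => y10; move: h2; rewrite -x12 -h1 y10 expr0n mulr0.
    by move/eqP; rewrite mulf_eq0 (negPf D0) sqrf_eq0 => /eqP ->; rewrite addr0.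
  by apply: on_curve_third => // _; field; rewrite D0 y1_0.
apply: on_curve_third => // [/eqP|_]; first by rewrite (negPf x12).
by rewrite /line_gap -h2 divfK ?subrK ?subrr // subr_eq0 eq_sym.
Qed.

Lemma cubic_form_frac (p q : int) : q != 0 ->
  (cubic_form f p q)%:~R = q%:~R ^+ 3 * (fQ f).[p%:~R / q%:~R].
Proof.
rewrite -(intr_eq0 rat) => q0.
by rewrite horner_fQ /cubic_form /= !(rmorphD, rmorphM, rmorphXn) /=; field.
Qed.

Lemma cubic_form_numq_denq x :
  (cubic_form f (numq x) (denq x))%:~R = (denq x)%:~R ^+ 3 * (fQ f).[x].
Proof. by rewrite cubic_form_frac ?denq_neq0 // divq_num_den. Qed.

Lemma cubic_form_two_torsion x : on_curve f d (Some (x, 0)) ->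
  cubic_form f (numq x) (denq x) = 0.
Proof.
rewrite /on_curve expr0n mulr0 => fx0.
by apply: (@intr_inj rat); rewrite cubic_form_numq_denq -fx0 mulr0.
Qed.

Lemma ec_dup_x x y : d != 0 -> on_curve f d (Some (x, y)) -> y != 0 ->
  dup_den f (numq x) (denq x) != 0 /\
  exists y', ec_add f d (Some (x, y)) (Some (x, y)) = Some (dup_x f x, y').
Proof.
move=> d0 /= hc y0; have D0 : D != 0 by rewrite intr_eq0.
have a3_0 := cubic_lead_neq0 f_size; have c3_0 : c 3 != 0 by rewrite intr_eq0.
set p := numq x; set q := denq x; have q0 : q != 0 := denq_neq0 x.
have Q0 : (q%:~R : rat) != 0 by rewrite intr_eq0.
have ex : x = p%:~R / q%:~R by rewrite divq_num_den.
have fx0 : (fQ f).[x] != 0 by rewrite -hc mulf_neq0 // expf_neq0.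
have eF := cubic_form_numq_denq x; rewrite -/p -/q in eF.
have G0 : dup_den f p q != 0.
  rewrite /dup_den !mulf_neq0 // -(intr_eq0 rat) eF mulf_neq0 // expf_neq0 //.
split=> //; rewrite /ec_add eqxx -mulr2n mulrn_eq0 (negPf y0) /=.
rewrite /ec_third /dup_x -/p -/q; eexists; congr (Some (_, _)).
set F' := ((fQ f)^`()).[x].
have -> : D * (F' / (2 * D * y)) ^+ 2 = F' ^+ 2 / (4 * (fQ f).[x]).
  by rewrite -hc; field; rewrite D0 y0.
have eN : (dup_num f p q)%:~R = q%:~R ^+ 4 * (F' ^+ 2 - (4 * c 2 + 8 * c 3 * x) * (fQ f).[x]).
  rewrite /dup_num; move: (cubic_form f p q) eF => C eC.
  rewrite !(rmorph_nat, rmorphB, rmorphD, rmorphM, rmorphXn) /= eC /F' horner_fQ_deriv ex.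
  by field.
have eG : (dup_den f p q)%:~R = q%:~R ^+ 4 * (4 * c 3 * (fQ f).[x]).
  rewrite /dup_den; move: (cubic_form f p q) eF => C eC.
  rewrite !(rmorph_nat, rmorphM) /= eC.
  by field.
by rewrite eN eG; field; rewrite fx0 c3_0.
Qed.

Definition chord_num (x y x' y' : int) : int :=
  d * (y' - y) ^+ 2 - (f`_2 + f`_3 * (x + x')) * (x' - x) ^+ 2.

Definition chord_den (x x' : int) : int := f`_3 * (x' - x) ^+ 2.

Lemma ec_add_ipt_x x y x' y' : x != x' ->
  chord_den x x' != 0 /\
  exists y3, ec_add f d (ipt x y) (ipt x' y') =
             Some ((chord_num x y x' y')%:~R / (chord_den x x')%:~R, y3).
Proof.
move=> xx'; have dx : x' - x != 0 by rewrite subr_eq0 eq_sym.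
have dxQ : (x'%:~R - x%:~R : rat) != 0 by rewrite -rmorphB intr_eq0.
split; first by rewrite mulf_neq0 ?expf_neq0 ?cubic_lead_neq0.
rewrite /ec_add /ipt eqr_int (negPf xx') /ec_third; eexists; congr (Some (_, _)).
rewrite /chord_num /chord_den !(rmorphB, rmorphD, rmorphM, rmorphXn) /=.
by field; rewrite dxQ intr_eq0 cubic_lead_neq0.
Qed.

Lemma chord_max_le x y x' y' M : d * y ^+ 2 = f.[x] -> d * y' ^+ 2 = f.[x'] ->
  `|x| <= M -> `|x'| <= M -> 1 <= M ->
  Num.max `|chord_num x y x' y'| `|chord_den x x'| <= 16 * cubic_norm f * M ^+ 3.
Proof.
move=> ey ey' xM xM' M1; set S := cubic_norm f.
have S0 : 0 <= S := sum_norm_ge0 _.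
have fM z : `|z| <= M -> `|f.[z]| <= S * M ^+ 3.
  by move=> zM; rewrite horner_cubic_form norm_homog_le // normr1.
have a2S : `|f`_2| <= S by rewrite norm_le_sum_norm // !inE eqxx !orbT.
have a3S : `|f`_3| <= S by rewrite norm_le_sum_norm // !inE eqxx !orbT.
have dx : `|x' - x| <= 2 * M by lia.
have dx2 : `|(x' - x) ^+ 2| <= 4 * M ^+ 2.
  by rewrite normrX; have := normr_ge0 (x' - x); nia.
have lead : `|f`_2 + f`_3 * (x + x')| <= 3 * S * M.
  rewrite (le_trans (ler_normD _ _)) // normrM.
  have : `|x + x'| <= 2 * M by lia.
  nia.
have dy : `|d * (y' - y) ^+ 2| <= 4 * (S * M ^+ 3).
  have nd z : `|d * z ^+ 2| = `|d| * z ^+ 2 by rewrite normrM (ger0_norm (sqr_ge0 z)).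
  have := fM _ xM; have := fM _ xM'; rewrite -ey -ey' !nd.
  have -> : `|d| * (y' - y) ^+ 2
            = 2 * (`|d| * y ^+ 2) + 2 * (`|d| * y' ^+ 2) - `|d| * (y' + y) ^+ 2 by ring.
  have := mulr_ge0 (normr_ge0 d) (sqr_ge0 (y' + y)); lra.
have M0 : 0 <= M by lia.
have M23 : S * M ^+ 2 <= S * M ^+ 3.
  by rewrite ler_wpM2l // [M ^+ 3]exprS ler_peMl // exprn_ge0.
have e3 : 3 * S * M * (4 * M ^+ 2) = 12 * (S * M ^+ 3) by rewrite [M ^+ 3]exprS; ring.
rewrite -mulrA ge_max; apply/andP; split.
  rewrite /chord_num (le_trans (ler_normB _ _)) //.
  have : `|(f`_2 + f`_3 * (x + x')) * (x' - x) ^+ 2| <= 3 * S * M * (4 * M ^+ 2).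
    by rewrite normrM; apply: ler_pM.
  rewrite e3; lra.
rewrite /chord_den normrM.
have : `|f`_3| * `|(x' - x) ^+ 2| <= 4 * (S * M ^+ 2).
  by rewrite mulrCA; apply: ler_pM.
by have := mulr_ge0 S0 (exprn_ge0 2 M0); lra.
Qed.

Lemma ec_add_ipt_opp x y y' : d != 0 -> d * y ^+ 2 = d * y' ^+ 2 -> y != y' ->
  ec_add f d (ipt x y) (ipt x y') = None.
Proof.
move=> d0 /eqP; rewrite -subr_eq0 -mulrBr mulf_eq0 (negPf d0) subr_eq0 eqf_sqr /=.
case/orP=> [/eqP -> /eqP //|/eqP -> _].
by rewrite /ec_add /ipt eqxx -intrD addNr eqxx.
Qed.

End GroupLaw.

Lemma hx_ge0 (R : realType) (Q : ecpt) : 0 <= (hx Q : R).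
Proof. by case: Q => [[x y]|] /=; [exact: ln_intr_ge0 | ]. Qed.

Lemma hx_ipt (R : realType) (x y : int) : (hx (ipt x y) : R) = ln ((Num.max `|x| 1)%:~R).
Proof. by rewrite -ht_int. Qed.

Lemma on_curve_ipt (f : {poly int}) (d x y : int) :
  d * y ^+ 2 = f.[x] -> on_curve f d (ipt x y).
Proof. by move=> e; rewrite /on_curve /ipt /fQ horner_map /= -e rmorphM rmorphXn. Qed.

Lemma hx_dup_bound (R : realType) (f : {poly int}) :
  size f = 4%N -> cubic_disc f != 0 ->
  exists c : R, forall d Q, d != 0 -> on_curve f d Q ->
    `|hx (ec_add f d Q Q) - 4 * hx Q| <= c.
Proof.
move=> sf disc0; have a3_0 := cubic_lead_neq0 sf.
set c_up : R := ln (dup_upper f)%:~R; set c_lo : R := ln (dup_lower f * `|dup_res f|)%:~R.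
set c_root : R := ln (cubic_norm f)%:~R.
have [up0 lo0 root0] : [/\ 0 <= c_up, 0 <= c_lo & 0 <= c_root] by split; exact: ln_intr_ge0.
exists (c_up + c_lo + 4 * c_root) => d [[x y]|] d0 hQ; last by rewrite /= mulr0 subr0 normr0; lra.
have hx_ge1 := ht_ge1 x; have lnx0 : 0 <= (hx (Some (x, y)) : R) := hx_ge0 _ _.
have [y0|y0] := eqVneq y 0.
  have -> : ec_add f d (Some (x, y)) (Some (x, y)) = None by rewrite /= eqxx y0 addr0 eqxx.
  have root : cubic_form f (numq x) (denq x) = 0.
    by apply: (cubic_form_two_torsion sf (d := d)); rewrite -y0.
  have := ler_ln_intr R hx_ge1 (ht_cubic_root_le a3_0 root); rewrite -/c_root.
  by rewrite /= sub0r normrN ger0_norm ?mulr_ge0 //; lra.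
have [G0 [y' ->]] := ec_dup_x sf d0 hQ y0.
have ht4 : 1 <= ht x ^+ 4 by rewrite exprn_ege1.
have lnX := ln_intrX R 4 (lt_le_trans ltr01 hx_ge1).
have up := ln_intr_le R (ht_ge1 _) ht4 (ht_dup_x_le G0).
have lo := ln_intr_le R ht4 (ht_ge1 _) (ht_dup_x_ge a3_0 disc0 G0).
rewrite lnX -/c_up in up; rewrite lnX -/c_lo in lo.
by rewrite ler_norml /=; apply/andP; split; lra.
Qed.

Lemma canon_height_hx_bound (R : realType) (f : {poly int}) :
  size f = 4%N -> cubic_disc f != 0 ->
  exists c : R, forall d Q, d != 0 -> on_curve f d Q ->
    `|canon_height f d Q - hx Q / 2| <= c.
Proof.
move=> sf disc0; have [c hc] := hx_dup_bound R sf disc0.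
exists (c / 6) => d Q d0 hQ.
have on_pow n : on_curve f d (ec_pow2 f d n Q).
  by elim: n => //= n IH; exact: on_curve_add.
have := tate_limit (a := fun n => hx (ec_pow2 f d n Q)) _ (fun n => hc d _ d0 (on_pow n)).
rewrite /canon_height /= ltr1n => /(_ isT).
have -> : (4 - 1 : R) = 3 by lra.
by rewrite !ler_norml /hseq => /andP[lo hi]; apply/andP; split; lra.
Qed.

Lemma hx_add_integral_le (R : realType) (f : {poly int}) : size f = 4%N ->
  exists2 L : R, 0 <= L & forall d x y x' y',
    d * y ^+ 2 = f.[x] -> d * y' ^+ 2 = f.[x'] -> x != x' ->
    hx (ec_add f d (ipt x y) (ipt x' y')) <= 3 * Num.max (hx (ipt x y)) (hx (ipt x' y')) + L.
Proof.
move=> sf; exists (ln (16 * cubic_norm f)%:~R); first exact: ln_intr_ge0.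
move=> d x y x' y' ey ey' xx'.
have [D0 [y3 ->]] := ec_add_ipt_x d sf y y' xx'.
set M := Num.max (Num.max `|x| 1) (Num.max `|x'| 1).
have M1 : 1 <= M by rewrite !le_max lexx !orbT.
have xM : `|x| <= M by rewrite !le_max lexx.
have xM' : `|x'| <= M by rewrite !le_max lexx !orbT.
have htS := le_trans (ht_frac_le _ D0) (chord_max_le sf ey ey' xM xM' M1).
have := ln_intr_le R (ht_ge1 _) (exprn_ege1 3 M1) htS.
rewrite ln_intrX ?(lt_le_trans ltr01) // => /le_trans; apply.
rewrite addrC lerD2r ler_wpM2l // !hx_ipt /M.
by case: (leP (Num.max `|x| 1) (Num.max `|x'| 1)) => _; rewrite le_max lexx ?orbT.
Qed.

Unset Implicit Arguments.

Theorem lemma4p17 (R : realType) (f : {poly int}) :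
  size f = 4%N -> cubic_disc f != 0 ->
  exists C : R, forall (d : int), squarefree_int d ->
    forall x y x' y' : int,
      d * y ^+ 2 = f.[x] -> d * y' ^+ 2 = f.[x'] -> (x, y) <> (x', y') ->
      canon_height f d (ec_add f d (ipt x y) (ipt x' y')) <=
        3 * Num.max (canon_height f d (ipt x y)) (canon_height f d (ipt x' y')) + C.
Proof.
move=> sf disc0.
have [c hc] := canon_height_hx_bound R sf disc0.
have [L L0 hL] := hx_add_integral_le R sf.
exists (L / 2 + 4 * c) => d [d0 _] x y x' y' ey ey' PP'.
have near_hx Q : on_curve f d Q ->
    hx Q / 2 - c <= canon_height f d Q <= hx Q / 2 + c.
  by move=> hQ; rewrite -ler_distl hc.
have c0 : 0 <= c := le_trans (normr_ge0 _) (hc d None d0 I).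
have /andP[hP _] := near_hx _ (on_curve_ipt ey).
have /andP[hP' _] := near_hx _ (on_curve_ipt ey').
set m := Num.max _ _; have mP : canon_height f d (ipt x y) <= m by rewrite le_max lexx.
have mP' : canon_height f d (ipt x' y') <= m by rewrite le_max lexx orbT.
have := hx_ge0 R (ipt x y); have := hx_ge0 R (ipt x' y').
have [exx'|xx'] := eqVneq x x'.
  subst x'; have yy' : y != y' by apply/eqP => e; apply: PP'; rewrite e.
  rewrite ec_add_ipt_opp // ?ey ?ey' //.
  have /andP[_ hO] := near_hx None I; rewrite /= mul0r add0r in hO; lra.
have /andP[_ hS] := near_hx _ (on_curve_add sf d0 (on_curve_ipt ey) (on_curve_ipt ey')).
have hmax : Num.max (hx (ipt x y)) (hx (ipt x' y')) <= 2 * m + 2 * c.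
  by rewrite ge_max; apply/andP; split; lra.
have := hL d x y x' y' ey ey' xx'; lra.
Qed.
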